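(* Assume the standing setup and let $I\subseteq[k]$ be such that $\{\alpha_l\mid l\in I\}$ is a basis of $V_1$ (so that $\{\beta_l\mid l\in I\}$ is a basis of $V_2$). Let $h\in[k]\setminus I$ and $j\in I$, and write $\alpha_h=\sum_{l\in I}a_l\alpha_l$, $\beta_h=\sum_{l\in I}b_l\beta_l$ with $a_l,b_l\in\mathbb{F}$. If $a_j\neq0$, then for any distinct $i_2,\dots,i_d\in I\setminus\{j\}$, we have $$\zeta_{j,i_2,\dots,i_d}\,a_j=\zeta_{h,i_2,\dots,i_d}\,b_j,$$ where $\zeta_{l_1,\dots,l_d}$ denotes the nonzero scalar with $\psi(\alpha_{l_1}\wedge\cdots\wedge\alpha_{l_d})=\zeta_{l_1,\dots,l_d}\,\beta_{l_1}\wedge\cdots\wedge\beta_{l_d}$ (which exists for both index tuples $(j,i_2,\dots,i_d)$ and $(h,i_2,\dots,i_d)$).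
   Context: Standing setup: $\mathbb{F}$ is a field of characteristic $0$; $W$ is a group with finite generating set $S=\{s_1,\dots,s_k\}$. A linear map on a finite-dimensional space is a (generalized) reflection if it is diagonalizable and $s-\operatorname{Id}$ has rank $1$; a reflection vector is a nonzero vector in $\operatorname{Im}(s-\operatorname{Id})$. $(V_1,\rho_1)$, $(V_2,\rho_2)$ are irreducible reflection representations of $(W,S)$ (each $s_i$ acts by a reflection), both of dimension $n$. For each $i\in[k]$, $\alpha_i\in V_1$ is a chosen reflection vector of $s_i$ and $\beta_i\in V_2$ a chosen reflection vector of $s_i$. $d$ is an integer with $1\le d\le n-1$, and $\psi:\bigwedge^dV_1\to\bigwedge^dV_2$ is an isomorphism of $W$-modules ($W$ acting diagonally). Whenever $\alpha_{l_1},\dots,\alpha_{l_d}$ are linearly independent, so are $\beta_{l_1},\dots,\beta_{l_d}$, and $\psi$ maps $\alpha_{l_1}\wedge\cdots\wedge\alpha_{l_d}$ to a nonzero multiple of $\beta_{l_1}\wedge\cdots\wedge\beta_{l_d}$. *)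

From HB Require Import structures.
From mathcomp Require Import monoid.
From mathcomp Require Import all_boot all_order all_algebra.
Set Implicit Arguments. Unset Strict Implicit. Unset Printing Implicit Defensive.
Import GRing.Theory.
Local Open Scope ring_scope.

Definition dsub (n d : nat) := {J : {set 'I_n} | #|J| == d}.
(* the space bigwedge^d F^n, coordinates w.r.t. the basis e_J, J a d-subset *)
Notation extp F n d := {ffun dsub n d -> (F%type)^o}.

Section Defs.
Variable F : fieldType.

Definition generates (W : groupType) (k : nat) (s : 'I_k -> W) : Prop :=
  forall P : W -> Prop,
    P 1%g -> (forall i, P (s i)) ->
    (forall x y, P x -> P y -> P (x * y)%g) ->
    (forall x, P x -> P (x^-1)%g) -> forall w, P w.

Definition is_rep (W : groupType) (n : nat) (rho : W -> 'M[F]_n) : Prop :=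
  rho 1%g = 1%:M /\ forall x y, rho (x * y)%g = rho x *m rho y.

Definition reflection (n : nat) (A : 'M[F]_n) : Prop :=
  diagonalizable A /\ \rank (A - 1%:M) = 1%N.

Definition refl_vec (n : nat) (A : 'M[F]_n) (v : 'cV[F]_n) : Prop :=
  v != 0 /\ exists u : 'cV[F]_n, v = (A - 1%:M) *m u.

Definition invariant (W : groupType) (n : nat) (rho : W -> 'M[F]_n)
  (U : {vspace 'cV[F]_n}) : Prop :=
  forall w v, v \in U -> rho w *m v \in U.

Definition irreducible_rep (W : groupType) (n : nat) (rho : W -> 'M[F]_n) : Prop :=
  (0 < n)%N /\
  forall U : {vspace 'cV[F]_n}, invariant rho U -> U = 0%VS \/ U = fullv.

Definition refl_rep (W : groupType) (k n : nat) (s : 'I_k -> W)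
  (rho : W -> 'M[F]_n) : Prop :=
  is_rep rho /\ forall i, reflection (rho (s i)).


(* the a-th element (in increasing order) of the d-subset J *)
Definition elt (n d : nat) (J : dsub n d) (a : 'I_d) : 'I_n :=
  @enum_val _ (pred_of_set (val J)) (cast_ord (esym (eqP (valP J))) a).

Definition wedge (n d : nat) (v : 'I_d -> 'cV[F]_n) : extp F n d :=
  [ffun J => \det (\matrix_(a < d, b < d) v b (elt J a) 0)].

Definition minor (n d : nat) (g : 'M[F]_n) (J K : dsub n d) : F :=
  \det (\matrix_(a < d, b < d) g (elt J a) (elt K b)).

(* diagonal action of g on bigwedge^d F^n (d-th compound matrix):
   ext_act g (v_1 /\ ... /\ v_d) = g v_1 /\ ... /\ g v_d *)
Definition ext_act (n d : nat) (g : 'M[F]_n) (x : extp F n d) : extp F n d :=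
  [ffun J => \sum_(K : dsub n d) minor g J K * x K].

Definition tup (k d : nat) (j : 'I_k) (i : 'I_d -> 'I_k) : 'I_d -> 'I_k :=
  fun a => if val a == 0%N then j else i a.

Definition fam (k n d : nat) (al : 'I_k -> 'cV[F]_n) (l : 'I_d -> 'I_k) :
  seq 'cV[F]_n := [seq al (l a) | a <- enum 'I_d].

End Defs.

From HB Require Import structures.
From mathcomp Require Import monoid.
From mathcomp Require Import all_boot all_order all_algebra.
Set Implicit Arguments. Unset Strict Implicit. Unset Printing Implicit Defensive.
Import GRing.Theory.
Local Open Scope ring_scope.

(* Put A v := v /\ alpha_(i_2) /\ ... /\ alpha_(i_d) and
   B v := v /\ beta_(i_2) /\ ... /\ beta_(i_d); both are linear in v.  For
   each l in I, B beta_l = c_l psi (A alpha_l) for some scalar c_l: c_l = 0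
   when l is one of the i_m (B beta_l has a repeated factor), and otherwise
   alpha_l, alpha_(i_2), ... are independent, so c_l = 1 / zeta_(l,i_2,...);
   in particular c_j = 1 / zeta_(j,i_2,...).  Expanding alpha_h and beta_h in
   the two bases and using the injectivity of psi gives
   A (sum_l (a_l - zeta_(h,i_2,...) b_l c_l) alpha_l) = 0.  Were the
   coefficient of alpha_j nonzero, this combination would be independent of
   the alpha_(i_m) and its wedge could not vanish; hence
   zeta_(j,i_2,...) a_j = zeta_(h,i_2,...) b_j.  Beyond linear algebra, only
   the injectivity of psi and its action on wedges of independent alphas
   are used. *)

Lemma comp_dfwith (I : eqType) (S T : Type) (v : S -> T) (f : I -> S) i0 (x : S) :
  v \o @dfwith _ (fun=> S) f i0 x =1 @dfwith _ (fun=> T) (v \o f) i0 (v x).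
Proof. by move=> j /=; case: (eqVneq i0 j) => [<-|?]; rewrite ?dfwith_in ?dfwith_out. Qed.

Section FreeFamilies.
Variables (F : fieldType) (vT : vectType F).

Lemma free_enumP (T : finType) (A : {pred T}) (u : T -> vT) :
  reflect (forall x : T -> F, \sum_(t in A) x t *: u t = 0 -> {in A, x =1 fun=> 0})
          (free [seq u t | t <- enum A]).
Proof.
pose X := map_tuple u (enum_tuple A).
have XE (t0 : T) (p : 'I_#|A|) : X`_p = u (enum_val p).
  by rewrite /X /= (nth_map t0) ?(enum_val_nth t0) // -cardE.
have sumE x : \sum_(t in A) x t *: u t = \sum_(p < #|A|) x (enum_val p) *: X`_p.
  by rewrite big_enum_val; apply: eq_bigr => p _; rewrite (XE (enum_val p)).
apply: (iffP (@freeP _ _ _ X)) => [X_free x /eqP | A_free k /eqP k0 p].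
  rewrite sumE => /eqP /X_free x0 t tA.
  by rewrite -(enum_rankK_in tA tA) x0.
have pA := enum_valP p; pose x t := k (enum_rank_in pA t).
have := A_free x; rewrite sumE => /(_ _ _ pA).
by rewrite /x !enum_valK_in; apply; under eq_bigr do rewrite enum_valK_in; apply/eqP.
Qed.

Lemma free_ordP d (u : 'I_d -> vT) :
  reflect (forall x : 'I_d -> F, \sum_p x p *: u p = 0 -> x =1 fun=> 0)
          (free [seq u p | p <- enum 'I_d]).
Proof.
apply: (iffP (free_enumP _ _)) => u_free x x0 p.
  by apply: (u_free x) => //; rewrite -x0; apply: eq_bigl.
by move=> _; apply: u_free.
Qed.

Lemma free_dfwith_sum (K : finType) (al : K -> vT) (I : {set K}) d
    (i : 'I_d -> K) (p0 : 'I_d) (l0 : K) (e : K -> F) :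
    free [seq al l | l <- enum I] -> l0 \in I -> e l0 != 0 ->
    {in predC1 p0, forall p, i p \in I :\ l0} -> {in predC1 p0 &, injective i} ->
  free [seq @dfwith _ (fun=> vT) (al \o i) p0 (\sum_(l in I) e l *: al l) p
       | p <- enum 'I_d].
Proof.
move=> /free_enumP al_free l0I el0 iI i_inj; apply/free_ordP => x x0.
pose c l := x p0 * e l + \sum_(p | p != p0) (i p == l)%:R * x p.
have /al_free c0 : \sum_(l in I) c l *: al l = 0.
  rewrite -[RHS]x0 (bigD1 p0) //= dfwith_in scaler_sumr.
  under eq_bigr do rewrite scalerDl scaler_suml -scalerA.
  rewrite big_split /=; congr (_ + _); rewrite exchange_big /=.
  apply: eq_bigr => p p'0; rewrite dfwith_out 1?eq_sym //.
  have /setD1P[_ ipI] := iI p p'0.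
  rewrite (bigD1 (i p)) //= eqxx mul1r big1 ?addr0 // => l /andP[_ l'ip].
  by rewrite eq_sym (negPf l'ip) mul0r scale0r.
have xp0 : x p0 = 0.
  have := c0 l0 l0I; rewrite /c big1 ?addr0 => [/eqP|p /iI /setD1P[/negPf -> _]].
    by rewrite mulf_eq0 (negPf el0) orbF => /eqP.
  by rewrite mul0r.
move=> p; have [->//|p'0] := eqVneq p p0.
have /setD1P[_ ipI] := iI p p'0.
have := c0 _ ipI; rewrite /c xp0 mul0r add0r (bigD1 p) //= eqxx mul1r.
rewrite big1 ?addr0 // => q /andP[q'0 q'p].
case: eqP => [/(i_inj _ _ q'0 p'0) qp | _]; last by rewrite mul0r.
by rewrite qp eqxx in q'p.
Qed.

End FreeFamilies.

Section Wedge.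
Variables (F : fieldType) (n d : nat).

Lemma eq_wedge (u u' : 'I_d -> 'cV[F]_n) : u =1 u' -> wedge u = wedge u'.
Proof.
move=> eq_u; apply/ffunP => J; rewrite !ffunE; congr (\det _).
by apply/matrixP => a b; rewrite !mxE eq_u.
Qed.

Lemma wedge_alternate (u : 'I_d -> 'cV[F]_n) p q :
  p != q -> u p = u q -> wedge u = 0.
Proof.
move=> neq_pq eq_u; apply/ffunP => J; rewrite !ffunE -det_tr.
by apply: (determinant_alternate neq_pq) => a; rewrite !mxE eq_u.
Qed.

Definition wedge_at (p0 : 'I_d) (u : 'I_d -> 'cV[F]_n) (v : 'cV[F]_n) : extp F n d :=
  wedge (@dfwith _ (fun=> 'cV[F]_n) u p0 v).

Lemma wedge_at_is_linear p0 u : linear (wedge_at p0 u).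
Proof.
move=> x v w; apply/ffunP => J; rewrite !ffunE.
pose M v := (\matrix_(a, b) @dfwith _ (fun=> 'cV[F]_n) u p0 v b (elt J a) 0)^T.
have := determinant_multilinear (A := M (x *: v + w)) (B := M v) (C := M w)
  (i0 := p0) (b := x) (c := 1).
rewrite !det_tr mul1r; apply.
- by apply/rowP => a; rewrite !mxE !dfwith_in !mxE mul1r.
- by apply/matrixP => a b; rewrite !mxE !dfwith_out ?neq_lift.
- by apply/matrixP => a b; rewrite !mxE !dfwith_out ?neq_lift.
Qed.

HB.instance Definition _ p0 u :=
  GRing.isLinear.Build F 'cV[F]_n (extp F n d) *:%R (wedge_at p0 u)
    (wedge_at_is_linear p0 u).

Lemma rank_exists_minor (M : 'M[F]_(n, d)) :
  \rank M = d -> exists J : dsub n d, \det (rowsub (elt J) M) != 0.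
Proof.
move=> rkM; pose f := maxrankfun M.
have cJ : #|f @: [set: 'I_(\rank M)]| == d.
  by rewrite card_imset ?cardsT ?card_ord ?rkM //; apply: maxrankfun_inj.
pose J : dsub n d := exist _ (f @: [set: _]) cJ; exists J.
rewrite -unitfE -unitmxE -row_free_unit -row_leq_rank -{1}rkM -(eqP (maxrowsub_free M)).
apply/mxrankS/row_subP => a; rewrite row_rowsub.
have fJ : f a \in val J by apply: imset_f.
apply: (eq_row_sub (cast_ord (eqP cJ) (enum_rank_in fJ (f a)))).
rewrite row_rowsub /elt (_ : cast_ord _ _ = enum_rank_in fJ (f a)) ?enum_rankK_in //.
exact: val_inj.
Qed.

Lemma free_col_rank (u : 'I_d -> 'cV[F]_n) :
  free [seq u b | b <- enum 'I_d] -> \rank (\matrix_(r < n, b < d) u b r 0) = d.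
Proof.
move=> /free_ordP u_free; rewrite -mxrank_tr; apply/eqP/inj_row_free => v vM0.
apply/rowP => b; rewrite mxE (u_free (v 0)) //; apply/colP => r.
move/matrixP: vM0 => /(_ 0 r); rewrite !mxE => vr0.
rewrite summxE -[RHS]vr0; apply: eq_bigr => c _.
by rewrite !mxE mulrC.
Qed.

Lemma free_wedge_neq0 (u : 'I_d -> 'cV[F]_n) :
  free [seq u b | b <- enum 'I_d] -> wedge u != 0.
Proof.
move=> /free_col_rank /rank_exists_minor [J]; apply: contraNneq => /ffunP/(_ J).
rewrite !ffunE => <-; apply/eqP; congr (\det _).
by apply/matrixP => a b; rewrite !mxE.
Qed.

End Wedge.

Lemma tup_dfwith k d (l : 'I_k) (i : 'I_d -> 'I_k) (p0 : 'I_d) :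
  val p0 = 0%N -> tup l i =1 @dfwith _ (fun=> 'I_k) i p0 l.
Proof.
move=> p0_0 p; rewrite /tup -p0_0 val_eqE.
by case: (eqVneq p p0) => [->|p'0]; rewrite ?dfwith_in // dfwith_out // eq_sym.
Qed.

Section WedgeRatio.
Variables (F : fieldType) (n d k : nat) (alpha beta : 'I_k -> 'cV[F]_n).
Variable psi : {linear extp F n d -> extp F n d}.
Hypothesis psi_inj : injective psi.
Hypothesis psi_wedge : forall l : 'I_d -> 'I_k, free (fam alpha l) ->
  exists2 c : F, c != 0 & psi (wedge (alpha \o l)) = c *: wedge (beta \o l).
Variables (I : {set 'I_k}) (p0 : 'I_d) (i : 'I_d -> 'I_k).
Hypothesis alphaI_free : free [seq alpha l | l <- enum I].
Hypothesis iI : {in predC1 p0, forall p, i p \in I}.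
Hypothesis i_inj : {in predC1 p0 &, injective i}.

Local Notation mark l := (@dfwith _ (fun=> 'I_k) i p0 l).
Local Notation wedge_alpha := (wedge_at p0 (alpha \o i)).
Local Notation wedge_beta := (wedge_at p0 (beta \o i)).

Lemma wedge_mark (v : 'I_k -> 'cV[F]_n) l : wedge (v \o mark l) = wedge_at p0 (v \o i) (v l).
Proof. exact/eq_wedge/comp_dfwith. Qed.

Lemma free_mark_sum l0 (e : 'I_k -> F) :
    l0 \in I -> {in predC1 p0, forall p, i p != l0} -> e l0 != 0 ->
  free [seq @dfwith _ (fun=> 'cV[F]_n) (alpha \o i) p0 (\sum_(l in I) e l *: alpha l) p
       | p <- enum 'I_d].
Proof.
move=> l0I i'l0 el0; apply: (free_dfwith_sum (l0 := l0)) => // p p'0.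
by rewrite in_setD1 i'l0 ?iI.
Qed.

Lemma free_mark_comb l l0 (e : 'I_k -> F) :
    l0 \in I -> {in predC1 p0, forall p, i p != l0} -> e l0 != 0 ->
  alpha l = \sum_(m in I) e m *: alpha m -> free (fam alpha (mark l)).
Proof.
move=> l0I i'l0 el0 alpha_l; rewrite /fam (eq_map (comp_dfwith alpha i p0 l)) alpha_l.
exact: (free_mark_sum (l0 := l0)).
Qed.

Lemma free_mark l : l \in I -> {in predC1 p0, forall p, i p != l} -> free (fam alpha (mark l)).
Proof.
move=> lI i'l; apply: (free_mark_comb (e := fun m => (m == l)%:R)) i'l _ _ => //.
  by rewrite eqxx oner_eq0.
rewrite (bigD1 l) //= eqxx scale1r big1 ?addr0 // => m /andP[_ /negPf->].
by rewrite scale0r.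
Qed.

Lemma wedge_alpha_sum_eq0 (x : 'I_k -> F) l0 :
    l0 \in I -> {in predC1 p0, forall p, i p != l0} ->
  wedge_alpha (\sum_(l in I) x l *: alpha l) = 0 -> x l0 = 0.
Proof.
move=> l0I i'l0; apply: contra_eq => xl0.
by apply/free_wedge_neq0/(free_mark_sum (l0 := l0)).
Qed.

Lemma wedge_beta_proportional l :
  l \in I -> exists c, wedge_beta (beta l) = c *: psi (wedge_alpha (alpha l)).
Proof.
move=> lI; have [/forall_inP i'l | /forall_inPn[p p'0 /negbNE/eqP ipl]] :=
  boolP [forall p in predC1 p0, i p != l].
  have [c c_neq0] := psi_wedge (free_mark lI i'l).
  rewrite !wedge_mark => psi_l; exists c^-1.
  by rewrite psi_l scalerA mulVf // scale1r.
exists 0; rewrite scale0r; apply: (wedge_alternate (p := p0) (q := p)).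
  by rewrite eq_sym.
by rewrite dfwith_in dfwith_out 1?eq_sym //= ipl.
Qed.

Lemma wedge_ratio h j (a b : 'I_k -> F) z1 z2 :
    j \in I -> {in predC1 p0, forall p, i p != j} ->
    alpha h = \sum_(l in I) a l *: alpha l -> beta h = \sum_(l in I) b l *: beta l ->
    psi (wedge_alpha (alpha j)) = z1 *: wedge_beta (beta j) ->
    psi (wedge_alpha (alpha h)) = z2 *: wedge_beta (beta h) ->
  z1 * a j = z2 * b j.
Proof.
move=> jI i'j Ha Hb psi_j psi_h.
have z1_neq0 : z1 != 0.
  have wj : wedge_alpha (alpha j) != 0.
    by rewrite -wedge_mark; apply/free_wedge_neq0/free_mark.
  by apply: contraNneq wj => z1_0; apply/eqP/psi_inj; rewrite psi_j z1_0 scale0r linear0.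
have /fin_all_exists[c' c'P] : forall l, exists c, l \in I ->
    wedge_beta (beta l) = c *: psi (wedge_alpha (alpha l)).
  move=> l; have [lI|_] := boolP (l \in I); last by exists 0.
  by have [c] := wedge_beta_proportional lI; exists c.
pose c l := if l == j then z1^-1 else c' l.
have cP : {in I, forall l, wedge_beta (beta l) = c l *: psi (wedge_alpha (alpha l))}.
  move=> l lI; rewrite /c; case: eqP => [->|_]; last exact: c'P.
  by rewrite psi_j scalerA mulVf // scale1r.
have sum_a : \sum_(l in I) a l *: psi (wedge_alpha (alpha l)) = psi (wedge_alpha (alpha h)).
  by rewrite Ha !linear_sum; apply: eq_bigr => l _; rewrite !linearZ.
have sum_bc : \sum_(l in I) (z2 * (b l * c l)) *: psi (wedge_alpha (alpha l)) =
    psi (wedge_alpha (alpha h)).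
  rewrite psi_h Hb linear_sum scaler_sumr; apply: eq_bigr => l lI.
  by rewrite linearZ /= (cP l lI) !scalerA mulrA.
have : a j - z2 * (b j * c j) = 0.
  apply: (wedge_alpha_sum_eq0 (x := fun l => a l - z2 * (b l * c l))) jI i'j _.
  apply: psi_inj; rewrite !linear0 !linear_sum /=.
  under eq_bigr do rewrite !linearZ /= scalerBl.
  by rewrite sumrB sum_a sum_bc subrr.
move/eqP; rewrite subr_eq0 => /eqP ->; rewrite /c eqxx.
by rewrite mulrCA [z1 * _]mulrC mulfVK.
Qed.

End WedgeRatio.

Theorem lemma5p17 (F : fieldType) (char0 : [pchar F] =i pred0)
  (W : groupType) (k : nat) (s : 'I_k -> W) (gen : generates s)
  (n : nat) (rho1 rho2 : W -> 'M[F]_n)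
  (rep1 : refl_rep s rho1) (rep2 : refl_rep s rho2)
  (irr1 : irreducible_rep rho1) (irr2 : irreducible_rep rho2)
  (alpha beta : 'I_k -> 'cV[F]_n)
  (Halpha : forall i, refl_vec (rho1 (s i)) (alpha i))
  (Hbeta : forall i, refl_vec (rho2 (s i)) (beta i))
  (d : nat) (d_ge1 : (1 <= d)%N) (d_le : (d <= n.-1)%N)
  (psi : {linear extp F n d -> extp F n d}) (psi_bij : bijective psi)
  (psi_equiv : forall (w : W) (x : extp F n d),
      psi (ext_act (rho1 w) x) = ext_act (rho2 w) (psi x))
  (Hwedge : forall l : 'I_d -> 'I_k, free (fam alpha l) ->
      free (fam beta l) /\
      exists2 c : F, c != 0 &
        psi (wedge (fun a => alpha (l a))) = c *: wedge (fun a => beta (l a)))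
  (I : {set 'I_k}) (HI : basis_of fullv [seq alpha l | l <- enum I])
  (h j : 'I_k) (hI : h \notin I) (jI : j \in I)
  (a b : 'I_k -> F)
  (Ha : alpha h = \sum_(l in I) a l *: alpha l)
  (Hb : beta h = \sum_(l in I) b l *: beta l)
  (aj : a j != 0)
  (i : 'I_d -> 'I_k)
  (iI : forall p : 'I_d, val p != 0%N -> i p \in I :\ j)
  (idist : forall p q : 'I_d, val p != 0%N -> val q != 0%N -> i p = i q -> p = q) :
  (exists z1 z2 : F, [/\ z1 != 0, z2 != 0,
     psi (wedge (fun p => alpha (tup j i p))) = z1 *: wedge (fun p => beta (tup j i p)) &
     psi (wedge (fun p => alpha (tup h i p))) = z2 *: wedge (fun p => beta (tup h i p))])
  /\
  (forall z1 z2 : F,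
     psi (wedge (fun p => alpha (tup j i p))) = z1 *: wedge (fun p => beta (tup j i p)) ->
     psi (wedge (fun p => alpha (tup h i p))) = z2 *: wedge (fun p => beta (tup h i p)) ->
     z1 * a j = z2 * b j).
Proof.
pose p0 : 'I_d := Ordinal d_ge1.
have p0E p : (p \in predC1 p0) = (val p != 0%N) by rewrite inE -val_eqE.
have tupE l := tup_dfwith l i (erefl : val p0 = 0%N).
have famE l : fam alpha (tup l i) = fam alpha (@dfwith _ (fun=> 'I_k) i p0 l).
  by apply: eq_map => p; rewrite /= tupE.
have iI' : {in predC1 p0, forall p, i p \in I}.
  by move=> p; rewrite p0E => /iI /setD1P[].
have i'j : {in predC1 p0, forall p, i p != j}.
  by move=> p; rewrite p0E => /iI /setD1P[].
have i_inj : {in predC1 p0 &, injective i}.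
  by move=> p q; rewrite !p0E; apply: idist.
have alphaI_free := basis_free HI.
split.
  have free_j : free (fam alpha (tup j i)).
    by rewrite famE; apply: (free_mark alphaI_free iI' i_inj jI i'j).
  have free_h : free (fam alpha (tup h i)).
    by rewrite famE; apply: (free_mark_comb alphaI_free iI' i_inj jI i'j aj Ha).
  have [_ [z1 z1_neq0 psi_j]] := Hwedge _ free_j.
  have [_ [z2 z2_neq0 psi_h]] := Hwedge _ free_h.
  by exists z1, z2.
move=> z1 z2; rewrite !(eq_wedge (fun p => congr1 _ (tupE _ p))) !wedge_mark.
have psi_wedge l (fl : free (fam alpha l)) := (Hwedge l fl).2.
exact: (wedge_ratio (bij_inj psi_bij) psi_wedge alphaI_free iI' i_inj).
Qed.
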